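(* Let $R$ be a ring such that $\mathrm{char}(R)$ is finite and $J(R)$ is nil of bounded index. If the group $U(R/J(R))$ has finite exponent, then so does $U(R)$. If additionally $R/J(R)$ is clean, then $R$ is $n$-torsion clean for some $n\in\mathbb{N}$.
   Context: All rings are associative with identity; $\mathrm{char}(R):=|1\cdot\mathbb{Z}|$, $J(R)$ is the Jacobson radical, $U(\cdot)$ the unit group. An ideal $I$ is nil of bounded index if there is $k$ with $r^k=0$ for all $r\in I$. A ring is clean if every element is a sum of an idempotent and a unit. A ring $R$ is $n$-torsion clean if every $r\in R$ can be written $r=e+u$ with $e^2=e$, $u$ a unit, $u^n=1$, and $n$ is the smallest natural number with this property. *)

From HB Require Import structures.
From mathcomp Require Import all_boot all_order all_algebra.
Set Implicit Arguments. Unset Strict Implicit. Unset Printing Implicit Defensive.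
Import GRing.Theory.
Local Open Scope ring_scope.

(* All rings: associative with identity (possibly the zero ring, possibly
   noncommutative, possibly infinite): MathComp's pzRingType. *)

Definition is_unit (R : pzRingType) (u : R) : Prop :=
  exists v : R, u * v = 1 /\ v * u = 1.

Definition finite_char (R : pzRingType) : Prop :=
  exists n : nat, (0 < n)%N /\ n%:R = 0 :> R.

Definition jacobson (R : pzRingType) (x : R) : Prop :=
  forall r : R, is_unit (1 - r * x).

Definition nil_bounded_index (R : pzRingType) (I : R -> Prop) : Prop :=
  exists k : nat, forall r : R, I r -> r ^+ k = 0.

Definition units_finite_exponent (R : pzRingType) : Prop :=
  exists m : nat, (0 < m)%N /\ forall u : R, is_unit u -> u ^+ m = 1.

(* The quotient R / J(R), written out on coset representatives:
   the coset a + J is a unit of R/J iff there is b with ab - 1, ba - 1 in J. *)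
Definition unit_mod_J (R : pzRingType) (a : R) : Prop :=
  exists b : R, jacobson (a * b - 1) /\ jacobson (b * a - 1).

Definition quot_units_finite_exponent (R : pzRingType) : Prop :=
  exists m : nat, (0 < m)%N /\
    forall a : R, unit_mod_J a -> jacobson (a ^+ m - 1).

Definition quot_clean (R : pzRingType) : Prop :=
  forall r : R, exists e u : R,
    jacobson (e * e - e) /\ unit_mod_J u /\ jacobson (r - (e + u)).

Definition torsion_clean_with (R : pzRingType) (n : nat) : Prop :=
  forall r : R, exists e u : R,
    e * e = e /\ is_unit u /\ u ^+ n = 1 /\ r = e + u.

Definition n_torsion_clean (R : pzRingType) (n : nat) : Prop :=
  (0 < n)%N /\ torsion_clean_with R n /\
  forall m : nat, (0 < m)%N -> (m < n)%N -> ~ torsion_clean_with R m.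

(* If u^m = 1 modulo J, then u^m = 1 + x with x^k = 0.  Since 1 and x commute,
   the binomial theorem applies, and n divides C(n k!, i) for 0 < i < k, so
   (1 + x)^(n k!) = 1 in characteristic n: U(R) has exponent dividing m n k!.
   For cleanness, idempotents lift modulo the nil ideal J along the Newton
   iteration x |-> x + (1 - 2x)(x^2 - x) = 3x^2 - 2x^3, whose defect
   (x')^2 - x' = (4y - 3) y^2, y = x^2 - x, is nilpotent of half the index;
   and units modulo J are units.  So every r is f + u with f idempotent and u a
   unit, whence u^(m n k!) = 1, and a least such exponent exists. *)

From HB Require Import structures.
From mathcomp Require Import all_boot all_order all_algebra.
From Stdlib Require Import Classical.
Set Implicit Arguments.
Unset Strict Implicit.
Unset Printing Implicit Defensive.

Import GRing.Theory.
Local Open Scope ring_scope.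

Section Jacobson.
Variable R : pzRingType.
Implicit Types a b p q r s x y : R.

Lemma is_unitM a b : is_unit a -> is_unit b -> is_unit (a * b).
Proof.
move=> [a' [aa' a'a]] [b' [bb' b'b]]; exists (b' * a'); split.
  by rewrite mulrA -(mulrA a) bb' mulr1.
by rewrite mulrA -(mulrA b') a'a mulr1.
Qed.

Lemma is_unit_one_sub_mulC p q : is_unit (1 - p * q) -> is_unit (1 - q * p).
Proof.
move=> [v [hv vh]]; exists (1 + q * v * p); split.
  have -> : (1 - q * p) * (1 + q * v * p) =
            1 - q * p + q * ((1 - p * q) * v) * p.
    rewrite mulrBl !mulrDr !mul1r !mulr1 mulrBl mulrBr mul1r !mulrA.
    by rewrite mulrBl opprD !addrA (addrAC 1).
  by rewrite hv mulr1 subrK.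
have -> : (1 + q * v * p) * (1 - q * p) =
          1 - q * p + q * (v * (1 - p * q)) * p.
  by rewrite mulrDl !mulrBr !mul1r !mulr1 !mulrA mulrBl.
by rewrite vh mulr1 subrK.
Qed.

Lemma jacobson0 : jacobson (0 : R).
Proof. by move=> r; rewrite mulr0 subr0; exists 1; rewrite mulr1. Qed.

Lemma jacobsonMl s y : jacobson y -> jacobson (s * y).
Proof. by move=> Jy r; rewrite mulrA; apply: Jy. Qed.

Lemma jacobsonMr y s : jacobson y -> jacobson (y * s).
Proof.
by move=> Jy r; rewrite mulrA; apply: is_unit_one_sub_mulC; rewrite mulrA.
Qed.

Lemma jacobsonD x y : jacobson x -> jacobson y -> jacobson (x + y).
Proof.
move=> Jx Jy r; have [v [hv vh]] := Jx r.
have -> : 1 - r * (x + y) = (1 - r * x) * (1 - v * r * y).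
  by rewrite mulrBr mulr1 !mulrA hv mul1r mulrDr opprD addrA.
by apply: is_unitM; [exists v | apply: Jy].
Qed.

Lemma jacobsonN x : jacobson x -> jacobson (- x).
Proof. by rewrite -mulN1r; apply: jacobsonMl. Qed.

Lemma jacobsonB x y : jacobson x -> jacobson y -> jacobson (x - y).
Proof. by move=> Jx Jy; apply/jacobsonD/jacobsonN. Qed.

Lemma is_unit_one_add_jacobson x : jacobson x -> is_unit (1 + x).
Proof. by move=> Jx; have := Jx (-1); rewrite mulN1r opprK. Qed.

Lemma is_unit_unit_mod_J a : is_unit a -> unit_mod_J a.
Proof.
by move=> [b [ab ba]]; exists b; rewrite ab ba subrr; split; apply: jacobson0.
Qed.

Lemma unit_mod_J_is_unit a : unit_mod_J a -> is_unit a.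
Proof.
move=> [b [Jab Jba]].
have [c [abc cab]] : is_unit (a * b).
  by have := is_unit_one_add_jacobson Jab; rewrite addrC subrK.
have [d [bad dba]] : is_unit (b * a).
  by have := is_unit_one_add_jacobson Jba; rewrite addrC subrK.
have db_bc : d * b = b * c.
  by rewrite -[d * b]mulr1 -abc !mulrA -(mulrA d) dba mul1r.
by exists (b * c); split; [rewrite mulrA abc | rewrite -db_bc -mulrA dba].
Qed.

Lemma unit_mod_J_congr a u : jacobson (a - u) -> unit_mod_J u -> unit_mod_J a.
Proof.
move=> Jau [b [Jub Jbu]]; exists b; split.
  have -> : a * b - 1 = (u * b - 1) + (a - u) * b.
    by rewrite mulrBl [RHS]addrC -addrA addKr.
  by apply: jacobsonD => //; apply: jacobsonMr.
have -> : b * a - 1 = (b * u - 1) + b * (a - u).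
  by rewrite mulrBr [RHS]addrC -addrA addKr.
by apply: jacobsonD => //; apply: jacobsonMl.
Qed.

End Jacobson.

Lemma dvdn_bin_mul_fact n k i : (0 < i < k)%N -> (n %| 'C(n * k`!, i))%N.
Proof.
case: i => [//|i] /andP[_ lt_ik].
have [t fact_k] : exists t, k`! = (t * i.+1)%N.
  by apply/dvdnP; apply: dvdn_fact; rewrite /= ltnW.
have := mul_bin_diag (n * k`!) i.
rewrite {1}fact_k mulnA mulnAC mulnC => /eqP; rewrite eqn_pmul2l // => /eqP <-.
by rewrite -mulnA dvdn_mulr.
Qed.

Lemma expr_nilpotent_add1 (R : pzRingType) n k (x : R) :
  n%:R = 0 :> R -> x ^+ k = 0 -> (x + 1) ^+ (n * k`!) = 1.
Proof.
move=> char_n nil_x; rewrite exprD1n big_ord_recl expr0 bin0 mulr1n big1 ?addr0 //.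
move=> [i lt_i] _ /=; rewrite /bump /= add1n.
have [le_ki | lt_ik] := leqP k i.+1.
  by rewrite -(subnK le_ki) exprD nil_x mulr0 mul0rn.
have [q ->] := dvdnP (@dvdn_bin_mul_fact n k i.+1 lt_ik).
by rewrite mulrnA -mulr_natr char_n mulr0.
Qed.

Lemma units_exponent_lift (R : pzRingType) n k m :
  n%:R = 0 :> R -> (forall r : R, jacobson r -> r ^+ k = 0) ->
  (forall a : R, unit_mod_J a -> jacobson (a ^+ m - 1)) ->
  forall u : R, is_unit u -> u ^+ (m * (n * k`!)) = 1.
Proof.
move=> char_n nilJ expJ u /is_unit_unit_mod_J/expJ/nilJ nil_x.
by rewrite exprM -[u ^+ m](subrK 1); apply: expr_nilpotent_add1.
Qed.

Section IdempotentLifting.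
Variable R : pzRingType.
Implicit Types x y c : R.

Lemma sqr_sub_self_add_comm x y c :
  GRing.comm c x -> GRing.comm c y -> GRing.comm x y ->
  (x + c * y) * (x + c * y) - (x + c * y) =
  x * x - x + c * (x *+ 2 - 1) * y + c * c * (y * y).
Proof.
move=> cx cy xy.
rewrite mulrDl !mulrDr -!mulrA (mulrA y c) -cy -(mulrA c) -xy !mulrA -cx.
rewrite mulrN1 !mulrDl mulNr opprD !addrA [RHS]addrAC; congr (_ + _).
by rewrite !(addrAC _ (- x)).
Qed.

Definition idem_step x := x + (1 - x *+ 2) * (x * x - x).

Lemma comm_sqr_sub_self x : GRing.comm x (x * x - x).
Proof. by rewrite /GRing.comm mulrBr mulrBl mulrA. Qed.

Lemma sqr_one_sub_double x :
  (1 - x *+ 2) * (1 - x *+ 2) = 1 + (x * x - x) *+ 4.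
Proof.
rewrite mulrBl mul1r mulrBr mulr1 mulrnAl mulrnAr -mulrnA mulrnBl opprB.
by rewrite -addrA; congr (_ + _); rewrite addrCA -opprD -mulrnDr.
Qed.

Lemma idem_step_sub x : idem_step x - x = (1 - x *+ 2) * (x * x - x).
Proof. by rewrite /idem_step addrC addKr. Qed.

Lemma idem_step_defect x :
  idem_step x * idem_step x - idem_step x =
  ((x * x - x) *+ 4 - 3) * ((x * x - x) * (x * x - x)).
Proof.
have cx : GRing.comm (1 - x *+ 2) x.
  exact/commr_sym/commrB/commrMn/commr_refl/commr1.
rewrite /idem_step sqr_sub_self_add_comm //; last exact: comm_sqr_sub_self.
  rewrite -[x *+ 2 - 1]opprB mulrN sqr_one_sub_double; move: (x * x - x) => y.
  rewrite mulNr mulrDl mul1r opprD addrA subrr add0r [(1 + _) * _]mulrDl mul1r.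
  rewrite mulrnAl mulrBl mulr_natl.
  by rewrite addrC [y * y *+ 4]mulrS [y * y + _]addrC addrKA.
by apply: commrB => //; apply: commrM.
Qed.

Lemma lift_idempotent_pow2 j x :
  (x * x - x) ^+ (2 ^ j) = 0 -> jacobson (x * x - x) ->
  exists f, f * f = f /\ jacobson (f - x).
Proof.
elim: j x => [|j IHj] x nil_y J_y.
  exists x; split; last by rewrite subrr; apply: jacobson0.
  by apply/eqP; rewrite -subr_eq0 -(expr1 (x * x - x)) nil_y.
have [f [idem_f J_f]] : exists f, f * f = f /\ jacobson (f - idem_step x).
  apply: IHj.
  - rewrite idem_step_defect; move: (x * x - x) nil_y => y nil_y.
    rewrite exprMn_comm; last first.
      apply/commr_sym/commrB; last exact: commr_nat.
      exact/commrMn/commr_sym/commrM/commr_refl/commr_refl.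
    by rewrite -expr2 -exprM -expnS nil_y mulr0.
  - by rewrite idem_step_defect; apply/jacobsonMl/jacobsonMr.
exists f; split=> //.
rewrite -(subrK (idem_step x) f) -addrA idem_step_sub.
by apply: jacobsonD => //; apply: jacobsonMl.
Qed.

Lemma lift_idempotent k x : (forall r : R, jacobson r -> r ^+ k = 0) ->
  jacobson (x * x - x) -> exists f, f * f = f /\ jacobson (f - x).
Proof.
move=> nilJ J_y; apply: (@lift_idempotent_pow2 k) => //.
have le_k_2k : (k <= 2 ^ k)%N by apply/ltnW/ltn_expl.
by rewrite -(subnK le_k_2k) exprD nilJ // mulr0.
Qed.

End IdempotentLifting.

Lemma clean_of_quot_clean (R : pzRingType) k :
  (forall r : R, jacobson r -> r ^+ k = 0) -> quot_clean R ->
  forall r : R, exists e u : R, e * e = e /\ is_unit u /\ r = e + u.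
Proof.
move=> nilJ cleanJ r; have [e [u [J_e [unit_u J_r]]]] := cleanJ r.
have [f [idem_f J_fe]] := lift_idempotent nilJ J_e.
exists f, (r - f); split=> //; split; last by rewrite addrC subrK.
apply/unit_mod_J_is_unit/(unit_mod_J_congr _ unit_u).
have -> : r - f - u = (r - (e + u)) - (f - e).
  by rewrite opprD opprB !addrA (addrAC _ (- u)) subrK addrAC.
exact: jacobsonB.
Qed.

Lemma exists_least_pos (P : nat -> Prop) M : (0 < M)%N -> P M ->
  exists n, (0 < n)%N /\ P n /\ forall m, (0 < m)%N -> (m < n)%N -> ~ P m.
Proof.
elim/ltn_ind: M => M IH M_gt0 PM.
have [[m [m_gt0 [lt_mM Pm]]] | no_less] :=
  classic (exists m, (0 < m)%N /\ (m < M)%N /\ P m).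
  exact: IH m lt_mM m_gt0 Pm.
by exists M; do ![split] => // m m_gt0 lt_mM Pm; apply: no_less; exists m.
Qed.

Theorem corollary2p11 (R : pzRingType) :
  finite_char R ->
  nil_bounded_index (@jacobson R) ->
  quot_units_finite_exponent R ->
  units_finite_exponent R /\
  (quot_clean R -> exists n : nat, n_torsion_clean R n).
Proof.
move=> [n [n_gt0 char_n]] [k nilJ] [m [m_gt0 expJ]].
have M_gt0 : (0 < m * (n * k`!))%N by rewrite !muln_gt0 m_gt0 n_gt0 fact_gt0.
have expU := units_exponent_lift char_n nilJ expJ.
split; first by exists (m * (n * k`!))%N.
move=> cleanJ; apply: (exists_least_pos M_gt0) => r.
have [e [u [idem_e [unit_u ->]]]] := clean_of_quot_clean nilJ cleanJ r.
by exists e, u; do ![split] => //; apply: expU.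
Qed.
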